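(* Let $\sigma$ be a signature and $k$ a natural number; let $\chi_0:=\bot$ and $\chi_k:=\chi\vee\dots\vee\chi$ ($k$ disjuncts) for $k\ge1$. (i) For any generalized causal team $T$ over $\sigma$: $T\models^g\chi_k$ iff $|T/_{\approx}|\leq k$. (ii) For any causal team $T$ over $\sigma$: $T\models^c\chi_k$ iff $|T^-|\leq k$.
   Context: A signature $\sigma=(\mathrm{Dom},\mathrm{Ran})$: $\mathrm{Dom}$ nonempty finite set of variables, each with nonempty finite range $\mathrm{Ran}(X)$; $\mathbf X=\mathbf x$ abbreviates $X_1=x_1\wedge\dots\wedge X_n=x_n$ ($\mathbf x\in\prod\mathrm{Ran}(X_i)$), inconsistent if it contains $X=x,X=x'$ with $x\ne x'$. ${=}(V)$ is the constancy atom; $\bot$ abbreviates $X=x\wedge\neg(X=x)$. With $\mathbf W_V$ listing $\mathrm{Dom}\setminus\{V\}$, $\chi:=\bigwedge_{V\in\mathrm{Dom}}\bigwedge_{\mathbf w\in\mathrm{Ran}(\mathbf W_V)}\big(\mathbf W_V=\mathbf w\;\Box\!\!\rightarrow{=}(V)\big)\wedge\bigwedge_{V\in\mathrm{Dom}}{=}(V)$. Systems of functions $\mathcal F$: for each $V\in\mathrm{En}(\mathcal F)\subseteq\mathrm{Dom}$ parents $PA^{\mathcal F}_V\subseteq\mathrm{Dom}\setminus\{V\}$ and $\mathcal F_V:\mathrm{Ran}(PA^{\mathcal F}_V)\to\mathrm{Ran}(V)$; $\mathrm{Ex}(\mathcal F)=\mathrm{Dom}\setminus\mathrm{En}(\mathcal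 F)$; only recursive (acyclic parent graph). An assignment $s$ is compatible with $\mathcal F$ if $s(V)=\mathcal F_V(s(PA^{\mathcal F}_V))$ for $V\in\mathrm{En}(\mathcal F)$. For consistent $\mathbf X=\mathbf x$: $\mathcal F_{\mathbf X=\mathbf x}$ restricts $\mathcal F$ to $\mathrm{En}(\mathcal F)\setminus\mathbf X$; $s^{\mathcal F}_{\mathbf X=\mathbf x}$: $X_i\mapsto x_i$, $V\mapsto s(V)$ on $\mathrm{Ex}(\mathcal F)\setminus\mathbf X$, $V\mapsto\mathcal F_V(s^{\mathcal F}_{\mathbf X=\mathbf x}(PA^{\mathcal F}_V))$ on $\mathrm{En}(\mathcal F)\setminus\mathbf X$. Causal team $T=(T^-,\mathcal F)$ ($T^-$ a set of compatible assignments; empty team components identified as $\emptyset$); causal subteams $(S^-,\mathcal F)$, $S^-\subseteq T^-$; $T_{\mathbf X=\mathbf x}=(\{s^{\mathcal F}_{\mathbf X=\mathbf x}:s\in T^-\},\mathcal F_{\mathbf X=\mathbf x})$; $\models^c$: $T\models X=x$ iff $s(X)=x$ for all $s\in T^-$; $T\models{=}(V)$ iff $s(V)=s'(V)$ for all $s,s'\in T^-$; $T\models\neg\alpha$ iff $(\{s\},\mathcal F)\not\models\alpha$ for all $s\in T^-$; $\wedge$ classical; $T\models\varphi\vee\psi$ iff causal subteams $T_1,T_2$ exist with $T_1^-\cup T_2^-=T^-$, $T_1\models\varphi$, $T_2\models\psi$; $T\models\mathbf X=\mathbf x\;\Box\!\!\rightarrow\varphi$ iff $\mathbf X=\mathbf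 x$ inconsistent or $T_{\mathbf X=\mathbf x}\models\varphi$. Generalized causal team: a set $T$ of compatible pairs $(s,\mathcal F)$; $T^-=\{s:(s,\mathcal F)\in T\}$; $T_{\mathbf X=\mathbf x}=\{(s^{\mathcal F}_{\mathbf X=\mathbf x},\mathcal F_{\mathbf X=\mathbf x}):(s,\mathcal F)\in T\}$; $\models^g$: same clauses except $T\models\neg\alpha$ iff $\{(s,\mathcal F)\}\not\models\alpha$ for all $(s,\mathcal F)\in T$, and $T\models\varphi\vee\psi$ iff $T=T_1\cup T_2$ with $T_1\models\varphi$, $T_2\models\psi$. $\mathrm{Cn}(\mathcal F)=\{V\in\mathrm{En}(\mathcal F):\mathcal F_V\text{ constant}\}$; $\mathcal F_V\sim\mathcal G_V$ iff $\mathcal F_V(\mathbf x\mathbf y)=\mathcal G_V(\mathbf x\mathbf z)$ for all $\mathbf x\in\mathrm{Ran}(PA^{\mathcal F}_V\cap PA^{\mathcal G}_V)$, $\mathbf y\in\mathrm{Ran}(PA^{\mathcal F}_V\setminus PA^{\mathcal G}_V)$, $\mathbf z\in\mathrm{Ran}(PA^{\mathcal G}_V\setminus PA^{\mathcal F}_V)$; $\mathcal F\sim\mathcal G$ iff $\mathrm{En}(\mathcal F)\setminus\mathrm{Cn}(\mathcal F)=\mathrm{En}(\mathcal G)\setminus\mathrm{Cn}(\mathcal G)$ and $\mathcal F_V\sim\mathcal G_V$ for each such $V$. On pairs, $(s,\mathcal F)\approx(t,\mathcal G)$ iff $s=t$ and $\mathcal F\sim\mathcal G$; $T/_{\approx}$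 is the set of $\approx$-classes of elements of $T$. *)

From HB Require Import structures.
From mathcomp Require Import ssreflect ssrfun ssrbool eqtype ssrnat seq choice fintype finfun finset fingraph.
Set Implicit Arguments.
Unset Strict Implicit.
Unset Printing Implicit Defensive.

Section CausalTeams.

(* Signature sigma = (Dom, Ran): Dom is the finite type V of variables,
   Ran v the finite range of v (nonemptiness is a hypothesis of the theorem). *)
Variable V : finType.
Variable Ran : V -> finType.

Definition Asg := {dffun forall v : V, Ran v}.

(* Raw system of functions: parents PA and, for each variable, either
   None (exogenous) or Some f (endogenous with structural function f).
   f is stored as a function of the whole assignment; validity below requires
   it to depend only on the parents, so it is exactly a map Ran(PA_v) -> Ran(v). *)
Definition Sys := ({ffun V -> {set V}} * {dffun forall v : V, option {ffun Asg -> Ran v}})%type.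

Definition PA (F : Sys) (v : V) : {set V} := F.1 v.
Definition Fn (F : Sys) (v : V) : option {ffun Asg -> Ran v} := F.2 v.
Definition En (F : Sys) : {set V} := [set v | Fn F v != None].

Definition pedge (F : Sys) : rel V := fun x y => (y \in En F) && (x \in PA F y).

Definition valid_sys (F : Sys) : Prop :=
  [/\ (forall v, v \notin PA F v),
      (forall v, Fn F v = None -> PA F v = set0),
      (forall v f, Fn F v = Some f ->
          forall s t : Asg, (forall w, w \in PA F v -> s w = t w) -> f s = f t)
    &
      (forall x y, pedge F x y -> ~~ connect (pedge F) y x)].

Definition compatible (F : Sys) (s : Asg) : Prop :=
  forall v, match Fn F v with Some f => s v = f s | None => True end.

(* Interventions  X1 = x1 /\ ... /\ Xn = xn  as lists of (variable, value). *)
Definition intv := seq {x : V & Ran x}.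

Definition consistent (I : intv) : Prop :=
  forall i j, i \in I -> j \in I -> tag i = tag j -> i = j.

Definition ivars (I : intv) : {set V} := [set v | has (fun i => tag i == v) I].

Definition setv (I : intv) (s : Asg) : Asg :=
  finfun (fun v : V => foldr (fun i acc => if tag i == v
                                   then tagged_as (Tagged Ran (s v)) i else acc)
                             (s v) I).

Definition sys_int (F : Sys) (I : intv) : Sys :=
  ([ffun v => if v \in ivars I then set0 else PA F v],
   finfun (fun v : V => if v \in ivars I then None else Fn F v)
     : {dffun forall v : V, option {ffun Asg -> Ran v}}).

Definition step (F : Sys) (t : Asg) : Asg :=
  finfun (fun v : V => match Fn F v with Some f => f t | None => t v end).

(* s^F_{X=x}: the recursive computation along the (acyclic) parent graph,
   realised as #|V| rounds of recomputation starting from s with X set to x. *)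
Definition interv (F : Sys) (I : intv) (s : Asg) : Asg :=
  iter #|V| (step (sys_int F I)) (setv I s).

Inductive form : Type :=
  | FEq  (X : V) (x : Ran X)
  | FDep (X : V)
  | FNeg (a : form)
  | FAnd (a b : form)
  | FOr  (a b : form)
  | FCf  (I : intv) (a : form).

Fixpoint satc (F : Sys) (S : {set Asg}) (phi : form) : Prop :=
  match phi with
  | FEq X x => forall s, s \in S -> s X = x
  | FDep X => forall s t, s \in S -> t \in S -> s X = t X
  | FNeg a => forall s, s \in S -> ~ satc F [set s] a
  | FAnd a b => satc F S a /\ satc F S b
  | FOr a b => exists S1 S2 : {set Asg},
      [/\ S1 \subset S, S2 \subset S, S1 :|: S2 = S, satc F S1 a & satc F S2 b]
  | FCf J a => consistent J -> satc (sys_int F J) [set interv F J s | s in S] a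
  end.

Definition gint (I : intv) (p : Asg * Sys) : Asg * Sys :=
  (interv p.2 I p.1, sys_int p.2 I).

Fixpoint satg (T : {set Asg * Sys}) (phi : form) : Prop :=
  match phi with
  | FEq X x => forall p, p \in T -> p.1 X = x
  | FDep X => forall p q, p \in T -> q \in T -> p.1 X = q.1 X
  | FNeg a => forall p, p \in T -> ~ satg [set p] a
  | FAnd a b => satg T a /\ satg T b
  | FOr a b => exists T1 T2 : {set Asg * Sys},
      [/\ T = T1 :|: T2, satg T1 a & satg T2 b]
  | FCf J a => consistent J -> satg [set gint J p | p in T] a
  end.

Definition causal_team (F : Sys) (S : {set Asg}) : Prop :=
  valid_sys F /\ (forall s, s \in S -> compatible F s).

Definition gen_team (T : {set Asg * Sys}) : Prop :=
  forall p, p \in T -> valid_sys p.2 /\ compatible p.2 p.1.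

Definition fconst v (f : {ffun Asg -> Ran v}) : bool := [forall s, [forall t, f s == f t]].

Definition nonconst_en (F : Sys) : {set V} :=
  [set v | match Fn F v with Some f => ~~ fconst f | None => false end].

(* F_v ~ G_v: F_v(x y) = G_v(x z) for all values x of the common parents,
   y of PA^F_v \ PA^G_v, z of PA^G_v \ PA^F_v *)
Definition fsim (F G : Sys) v (f g : {ffun Asg -> Ran v}) : bool :=
  [forall s : Asg, [forall t : Asg,
     [forall w in PA F v :&: PA G v, s w == t w] ==> (f s == g t)]].

Definition sys_sim (F G : Sys) : bool :=
  (nonconst_en F == nonconst_en G) &&
  [forall v in nonconst_en F,
     match Fn F v, Fn G v with Some f, Some g => fsim F G f g | _, _ => false end].

Definition approx (p q : Asg * Sys) : bool := (p.1 == q.1) && sys_sim p.2 q.2.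

Definition quot (T : {set Asg * Sys}) : {set {set Asg * Sys}} :=
  [set [set q in T | approx p q] | p in T].

(* chi.  v0 is some variable (Dom nonempty); the conjunction is written as a
   right-nested fold ending with =(v0). *)
Definition Wlist (v : V) (s : Asg) : intv :=
  [seq Tagged Ran (s u) | u <- enum V & u != v].

Definition chi_cfs : seq form :=
  flatten [seq [seq FCf w (FDep v) | w <- undup [seq Wlist v s | s <- enum Asg]]
          | v <- enum V].

Definition chi (v0 : V) : form :=
  foldr FAnd (FDep v0) (chi_cfs ++ [seq FDep v | v <- enum V & v != v0]).

Definition fbot (v0 : V) (x0 : Ran v0) : form := FAnd (FEq x0) (FNeg (FEq x0)).

Fixpoint chik (v0 : V) (x0 : Ran v0) (k : nat) : form :=
  match k with
  | 0 => fbot x0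
  | 1 => chi v0
  | k'.+1 => FOr (chik x0 k') (chi v0)
  end.

End CausalTeams.

From Stdlib Require List.
From mathcomp Require Import ssreflect ssrfun ssrbool eqtype ssrnat seq choice fintype finfun finset fingraph.
Set Implicit Arguments. Unset Strict Implicit. Unset Printing Implicit Defensive.

(* A team satisfies chi iff its members are pairwise [approx]-related (for causal teams:
   iff it has at most one assignment).  The conjuncts =(V) force a common assignment, and
   the conjuncts W_V = w []-> =(V) force a common response of every V to every setting of
   the other variables.  Since each F_V depends only on its parents and each assignment is
   compatible, agreeing on the assignment and on all responses is exactly [approx]; so
   [approx] is the kernel of the map [profile], and a team satisfies the k-fold disjunction
   of chi iff it is covered by k fibres of that map, i.e. iff it meets at most k of them. *)

Section ImsetCover.
Variables (X K : finType) (key : X -> K).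

Lemma card_imset_le1 (T : {set X}) :
  #|key @: T| <= 1 <-> {in T &, forall p q, key p = key q}.
Proof.
split=> [/card_le1_eqP Hkey p q pT qT | Hkey]; first by apply: Hkey; apply: imset_f.
by apply/card_le1_eqP => _ _ /imsetP [p pT ->] /imsetP [q qT ->]; apply: Hkey.
Qed.

Lemma card_imsetU_le (A B : {set X}) : #|key @: (A :|: B)| <= #|key @: A| + #|key @: B|.
Proof. by rewrite imsetU; apply: leq_card_setU. Qed.

Lemma card_imset_leS (T : {set X}) n : #|key @: T| <= n.+1 ->
  exists T1 T2, [/\ T = T1 :|: T2, #|key @: T1| <= n & #|key @: T2| <= 1].
Proof.
move=> Hcard; have [->|[p pT]] := set_0Vmem T.
  by exists set0, set0; rewrite setU0 imset0 cards0.
pose B := key @^-1: [set key p].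
exists (T :\: B), (T :&: B); split; first by rewrite setUC setID.
  have sub : key @: (T :\: B) \subset key @: T :\ key p.
    apply/subsetP => k /imsetP [q]; rewrite !inE => /andP [qB qT] ->.
    by rewrite qB (imset_f key qT).
  rewrite -ltnS; apply: leq_trans (subset_leq_card sub) _.
  by rewrite (cardsD1 (key p)) imset_f in Hcard.
by apply/card_imset_le1 => q r; rewrite !inE => /andP [_ /eqP ->] /andP [_ /eqP ->].
Qed.

Lemma card_imset_le_unions (U : {set X}) (P : nat -> {set X} -> Prop) :
  (forall T : {set X}, T \subset U -> P 0 T <-> #|key @: T| <= 1) ->
  (forall n (T : {set X}), P n.+1 T <-> exists T1 T2, [/\ T = T1 :|: T2, P n T1 & P 0 T2]) ->
  forall n (T : {set X}), T \subset U -> (P n T <-> #|key @: T| <= n.+1).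
Proof.
move=> P0 PS; elim=> [|n IH] T sTU; first exact: P0.
rewrite PS; split=> [[T1 [T2 [eT H1 H2]]] | /card_imset_leS [T1 [T2 [eT c1 c2]]]];
  move: sTU; rewrite eT subUset => /andP [s1 s2].
  apply: leq_trans (card_imsetU_le _ _) _; rewrite -addn1.
  by apply: leq_add; [apply/(IH _ s1) | apply/(P0 _ s2)].
by exists T1, T2; split; [|apply/(IH _ s1) | apply/(P0 _ s2)].
Qed.

Lemma card_classes_kernel (R : rel X) (T : {set X}) :
  {in T &, forall p q, R p q = (key p == key q)} ->
  #|[set [set q in T | R p q] | p in T]| = #|key @: T|.
Proof.
move=> RE; pose fiber k := [set q in T | key q == k].
have -> : [set [set q in T | R p q] | p in T] = fiber @: (key @: T).
  rewrite -imset_comp; apply: eq_in_imset => p pT /=.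
  by apply/setP => q; rewrite !inE; case qT: (q \in T); rewrite //= RE // eq_sym.
apply: card_in_imset => _ _ /imsetP [p pT ->] /imsetP [q qT ->] efib.
by move/setP/(_ p): efib; rewrite !inE pT eqxx => /esym/eqP.
Qed.
End ImsetCover.

Lemma Forall_mem (T : eqType) (P : T -> Prop) (s : seq T) :
  List.Forall P s <-> {in s, forall x, P x}.
Proof.
elim: s => [|y s IH]; first by split=> // _; apply: List.Forall_nil.
rewrite List.Forall_cons_iff IH; split=> [[Py Hs] x | Hall].
  by rewrite in_cons => /predU1P [->|/Hs].
by split=> [|x xs]; apply: Hall; rewrite ?mem_head // in_cons xs orbT.
Qed.

Section Chi.
Variables (V : finType) (Ran : V -> finType) (v0 : V) (x0 : Ran v0).
Local Notation Asg := (Asg Ran).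
Local Notation form := (form Ran).
Local Notation FDep := (@FDep V Ran).

Section ConjunctionSemantics.
Variable P : form -> Prop.
Hypothesis P_FAnd : forall a b, P (FAnd a b) <-> P a /\ P b.

Lemma sat_foldr_FAnd a l : P (foldr (@FAnd V Ran) a l) <-> P a /\ List.Forall P l.
Proof.
elim: l => [|b l IH] /=; first by split=> [|[]//]; split.
rewrite P_FAnd IH List.Forall_cons_iff; tauto.
Qed.

Lemma sat_chi_conjuncts :
  P (chi Ran v0) <-> (forall v, P (FDep v)) /\ (forall v s, P (FCf (Wlist v s) (FDep v))).
Proof.
rewrite /chi sat_foldr_FAnd List.Forall_app /chi_cfs List.Forall_concat !List.Forall_map.
rewrite !Forall_mem.
split=> [[P0 [Pcf Pdep]] | [Pdep Pcf]]; split.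
- move=> v; have [-> // | nv] := eqVneq v v0.
  by apply: Pdep; rewrite mem_filter nv mem_enum.
- move=> v s; have vV : v \in Finite.enum V by rewrite -enumT mem_enum.
  move/List.Forall_map/Forall_mem: (Pcf v vV); apply.
  by rewrite mem_undup map_f ?mem_enum.
- exact: Pdep.
split=> [v _ | v _]; last exact: Pdep.
apply/List.Forall_map/Forall_mem => w; rewrite mem_undup => /mapP [s _ ->].
exact: Pcf.
Qed.
End ConjunctionSemantics.

Local Notation Sys := (Sys Ran).

Lemma consistent_Wlist v (s : Asg) : consistent (Wlist v s).
Proof. by move=> i j /mapP [x _ ->] /mapP [y _ ->] /= ->. Qed.

Lemma ivars_Wlist v (s : Asg) u : (u \in ivars (Wlist v s)) = (u != v).
Proof.
rewrite inE has_map; apply/hasP/idP => [[w] | uv].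
  by rewrite mem_filter /= => /andP [wv _] /eqP <-.
by exists u; rewrite /= ?eqxx // mem_filter uv mem_enum.
Qed.

Lemma setv_Wlist v (s r : Asg) u : setv (Wlist v s) r u = if u == v then r u else s u.
Proof.
have -> : (u == v) = (u \notin [seq w <- enum V | w != v]).
  by rewrite mem_filter mem_enum andbT negbK.
rewrite ffunE /Wlist; elim: (filter _ _) => [|w l IH] //=.
rewrite in_cons; case: eqVneq => [-> | _] /=; first by rewrite tagged_asE.
by rewrite IH.
Qed.

Lemma Fn_sys_int (F : Sys) I u : Fn (sys_int F I) u = if u \in ivars I then None else Fn F u.
Proof. by rewrite /Fn ffunE. Qed.

(* The value of [v] in [r] after the intervention [W_v = s(W_v)] on all other variables. *)
Definition response (F : Sys) (r : Asg) v (s : Asg) : Ran v :=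
  if Fn F v is Some f then f s else r v.

Lemma interv_Wlist (F : Sys) v (s r : Asg) :
  valid_sys F -> interv F (Wlist v s) r v = response F r v s.
Proof.
case=> noloop _ fdep _; set G := sys_int F (Wlist v s).
have GvE : Fn G v = Fn F v by rewrite Fn_sys_int ivars_Wlist eqxx.
have iter_off m u : u != v -> iter m (step G) (setv (Wlist v s) r) u = s u.
  move=> uv; elim: m => [|m IH] /=; first by rewrite setv_Wlist (negbTE uv).
  by rewrite ffunE Fn_sys_int ivars_Wlist uv.
have [n cardV] : exists n, #|V| = n.+1.
  by exists #|V|.-1; rewrite prednK //; apply/card_gt0P; exists v.
rewrite /interv cardV /= ffunE GvE /response; case Ev: (Fn F v) => [f|].
  rewrite (fdep _ _ Ev _ s) // => w wP; apply: iter_off.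
  by apply: contraTneq wP => ->.
elim: {cardV}n => [|n IH] /=; first by rewrite setv_Wlist eqxx.
by rewrite ffunE GvE Ev.
Qed.

Definition depends_on (A : {set V}) v (f : Asg -> Ran v) : Prop :=
  forall s t : Asg, {in A, forall w, s w = t w} -> f s = f t.

Lemma fsimP (F G : Sys) v (f g : {ffun Asg -> Ran v}) :
  depends_on (PA F v) f -> depends_on (PA G v) g -> reflect (f =1 g) (fsim F G f g).
Proof.
move=> fdep gdep; apply: (iffP forallP) => [Hsim s | efg s].
  by apply/eqP; move/forallP/(_ s)/implyP: (Hsim s); apply; apply/forall_inP.
apply/forallP => t; apply/implyP => /forall_inP st.
pose u : Asg := finfun (fun w => if w \in PA F v then s w else t w).
rewrite (fdep s u) => [|w wF]; last by rewrite ffunE wF.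
rewrite efg (gdep u t) // => w wG; rewrite ffunE.
by case: ifP => // wF; apply/eqP/st; rewrite inE wF.
Qed.

Lemma response_nonconst (F : Sys) r v s :
  compatible F r -> v \notin nonconst_en F -> response F r v s = r v.
Proof.
move/(_ v); rewrite /response inE; case: (Fn F v) => // f -> /negPn.
by move/forallP/(_ s)/forallP/(_ r)/eqP.
Qed.

Lemma nonconst_en_response (F G : Sys) r :
  compatible F r -> compatible G r ->
  (forall v s, response F r v s = response G r v s) ->
  nonconst_en F \subset nonconst_en G.
Proof.
move=> Fr Gr eFG; apply/subsetP => v; rewrite [v \in nonconst_en F]inE.
case Ev: (Fn F v) => [f|] // /negP nconst_f; apply/negPn/negP => vG; apply: nconst_f.
have fE s : f s = r v by rewrite -(response_nonconst s Gr vG) -eFG /response Ev.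
by apply/forallP => s; apply/forallP => t; rewrite !fE.
Qed.

Lemma sys_simP (F G : Sys) r :
  valid_sys F -> valid_sys G -> compatible F r -> compatible G r ->
  reflect (forall v s, response F r v s = response G r v s) (sys_sim F G).
Proof.
case=> _ _ Fdep _ [_ _ Gdep _] Fr Gr.
have fsim_some v : v \in nonconst_en F -> v \in nonconst_en G ->
    reflect (forall s, response F r v s = response G r v s)
      (match Fn F v, Fn G v with Some f, Some g => fsim F G f g | _, _ => false end).
  rewrite !inE /response; case Ef: (Fn F v) => [f|] //; case Eg: (Fn G v) => [g|] // _ _.
  exact: fsimP (Fdep _ _ Ef) (Gdep _ _ Eg).
apply: (iffP andP) => [[/eqP eFG /forall_inP Hsim] v s | eFG].
  have [vF | vF] := boolP (v \in nonconst_en F).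
    by apply/(fsim_some _ vF _)/Hsim => //; rewrite -eFG.
  by rewrite !response_nonconst // -eFG.
have eGF v s : response G r v s = response F r v s by rewrite eFG.
have eN : nonconst_en F = nonconst_en G.
  by apply/eqP; rewrite eqEsubset !(nonconst_en_response _ _ eFG, nonconst_en_response _ _ eGF).
split; first by rewrite eN.
by apply/forall_inP => v vF; apply/fsim_some => //; rewrite -eN.
Qed.

Definition profile (p : Asg * Sys) : Asg * {dffun forall v : V, {ffun Asg -> Ran v}} :=
  (p.1, finfun (fun v => [ffun s => response p.2 p.1 v s])).

Lemma profile_eqP p q :
  reflect (p.1 = q.1 /\ forall v s, response p.2 p.1 v s = response q.2 q.1 v s)
          (profile p == profile q).
Proof.
case: p q => [r F] [r' G] /=; apply: (iffP eqP) => [[-> eFG] | [<- eFG]].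
  split=> // v s; move/ffunP/(_ v): eFG; rewrite !ffunE => /ffunP/(_ s).
  by rewrite !ffunE.
by congr (_, _); apply: eq_dffun => v; apply: eq_dffun => s; apply: eFG.
Qed.

Lemma approx_profile p q :
  valid_sys p.2 -> compatible p.2 p.1 -> valid_sys q.2 -> compatible q.2 q.1 ->
  approx p q = (profile p == profile q).
Proof.
case: p q => [r F] [r' G] /= vF Fr vG Gr'; rewrite /approx /=.
case: (eqVneq r r') Gr' => [<- | ne] Gr' /=.
  by apply/(sys_simP vF vG Fr Gr')/profile_eqP => [eFG | [_ eFG]].
by apply/esym/negP => /profile_eqP [/= e _]; rewrite e eqxx in ne.
Qed.

Lemma satg_chi (T : {set Asg * Sys}) :
  gen_team T -> (satg T (chi Ran v0) <-> #|profile @: T| <= 1).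
Proof.
move=> HT; rewrite card_imset_le1 (sat_chi_conjuncts (P := satg T)) //.
have gint_response v s p : p \in T -> (gint (Wlist v s) p).1 v = response p.2 p.1 v s.
  by case/HT => vp _; apply: interv_Wlist.
split=> [[Hdep Hcf] p q pT qT | Hprof].
  apply/eqP/profile_eqP; split; first by apply/ffunP => v; apply: Hdep.
  move=> v s; rewrite -!gint_response //.
  by apply: (Hcf v s (@consistent_Wlist v s)); apply: imset_f.
split=> [v p q pT qT | v s _ _ _ /imsetP [p pT ->] /imsetP [q qT ->]];
  have /eqP/profile_eqP [e1 e2] := Hprof p q pT qT; first by rewrite e1.
by rewrite !gint_response.
Qed.

Lemma satc_chi (F : Sys) (S : {set Asg}) : satc F S (chi Ran v0) <-> #|S| <= 1.
Proof.
rewrite (sat_chi_conjuncts (P := satc F S)) //; split=> [[Hdep _] | /card_le1_eqP Heq].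
  by apply/card_le1_eqP => s t sS tS; apply/ffunP => v; apply: Hdep.
split=> [v s t sS tS | v s _ _ _ /imsetP [r rS ->] /imsetP [t tS ->]].
  by rewrite (Heq s t sS tS).
by rewrite (Heq r t rS tS).
Qed.

Lemma satg_fbot (T : {set Asg * Sys}) : satg T (fbot x0) <-> T = set0.
Proof.
split=> [[Heq Hneg] | ->]; last by split=> p; rewrite inE.
apply/setP => p; rewrite inE; apply/negbTE/negP => pT.
by apply: (Hneg p pT) => q; rewrite inE => /eqP ->; apply: Heq.
Qed.

Lemma satc_fbot (F : Sys) (S : {set Asg}) : satc F S (fbot x0) <-> S = set0.
Proof.
split=> [[Heq Hneg] | ->]; last by split=> s; rewrite inE.
apply/setP => s; rewrite inE; apply/negbTE/negP => sS.
by apply: (Hneg s sS) => t; rewrite inE => /eqP ->; apply: Heq.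
Qed.

Lemma satc_FOr (F : Sys) (S : {set Asg}) a b :
  satc F S (FOr a b) <-> exists S1 S2, [/\ S = S1 :|: S2, satc F S1 a & satc F S2 b].
Proof.
split=> [[S1 [S2 [_ _ <- H1 H2]]] | [S1 [S2 [-> H1 H2]]]]; exists S1, S2; split=> //.
  exact: subsetUl.
exact: subsetUr.
Qed.

Lemma satg_chik (T : {set Asg * Sys}) k :
  gen_team T -> (satg T (chik x0 k) <-> #|profile @: T| <= k).
Proof.
move=> HT; case: k => [|n].
  by rewrite satg_fbot leqn0 cards_eq0 imset_eq0; split=> [-> | /eqP].
apply: (card_imset_le_unions (U := T) (P := fun n T => satg T (chik x0 n.+1))) => //.
by move=> T' /subsetP sT'; apply: satg_chi => p /sT'; apply: HT.
Qed.

Lemma satc_chik (F : Sys) (S : {set Asg}) k : satc F S (chik x0 k) <-> #|S| <= k.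
Proof.
case: k => [|n]; first by rewrite satc_fbot leqn0 cards_eq0; split=> [-> | /eqP].
rewrite -(card_imset S (@inj_id Asg)).
apply: (card_imset_le_unions (U := S) (P := fun n S => satc F S (chik x0 n.+1))) => //.
  by move=> S' _; rewrite card_imset //; apply: satc_chi.
by move=> m S'; apply: satc_FOr.
Qed.
End Chi.

Unset Implicit Arguments.
Theorem proposition5p4 (V : finType) (Ran : V -> finType)
    (HRan : forall v : V, 0 < #|Ran v|) (v0 : V) (x0 : Ran v0) (k : nat) :
  (forall T : {set Asg Ran * Sys Ran},
      gen_team T -> (satg T (chik x0 k) <-> #|quot T| <= k)) /\
  (forall (F : Sys Ran) (S : {set Asg Ran}),
      causal_team F S -> (satc F S (chik x0 k) <-> #|S| <= k)).
Proof.
split=> [T HT | F S _]; last exact: satc_chik.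
rewrite satg_chik // /quot (card_classes_kernel (key := profile (Ran := Ran))) //.
by move=> p q /HT [vp cp] /HT [vq cq]; apply: approx_profile.
Qed.
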